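(* Let $k=4$, $p\in\mathbb{S}^n$, $R\in(0,\pi/2)$, $B_R=\{q:\mathbf{d}_p(q)\le R\}$, $y\in\partial B_R$, and $\gamma:[R,\pi]\to\mathbb{S}^n$ the unit-speed minimizing geodesic from $y$ to $-p$ with $\mathbf{d}_p(\gamma(s))=s$. Define on $B_R\setminus\{y\}$ \[Z=\Psi_y+\int_R^\pi h(s)\Psi_{\gamma(s)}\,ds,\qquad h(s):=\frac{\cos R}{\sin^2R}\sin s.\] Then at every point of $\partial B_R\setminus\{y\}$, \[-3\tan R\,\langle Z,\nabla\mathbf{d}_p\rangle=1+\int_R^\pi h(s)\,ds.\]
   Context: $\mathbb{S}^n$ is the unit round sphere with Levi-Civita connection $\nabla$; $\mathbf{d}_q$ is geodesic distance from $q$. With $k=4$: $I_k(r)=\int_0^r\sin^{k-1}s\,ds$, $\varphi(t)=I_k(t)\sin^{1-k}t$ for $t\in(0,\pi)$, $\varphi(0)=0$, $\Phi_q=(\varphi\circ\mathbf{d}_q)\nabla\mathbf{d}_q$ on $\mathbb{S}^n\setminus\{-q\}$, and $\Psi_q:=\Phi_{-q}$ on $\mathbb{S}^n\setminus\{q\}$. *)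

(* Points of R^{n+1} are represented as functions nat -> R, of which only the
   coordinates 0..n are meaningful; S^n = unit vectors of R^{n+1}. *)
From Stdlib Require Import Reals.
From Coquelicot Require Import Coquelicot.
Open Scope R_scope.

Definition dot (n : nat) (x y : nat -> R) : R := sum_f_R0 (fun i => x i * y i) n.

Definition on_sphere (n : nat) (x : nat -> R) : Prop := dot n x x = 1.

Definition veq (n : nat) (x y : nat -> R) : Prop := forall i, (i <= n)%nat -> x i = y i.

Definition vopp (x : nat -> R) : nat -> R := fun i => - x i.

Definition gdist (n : nat) (q x : nat -> R) : R := acos (dot n q x).

(* Riemannian gradient of d_q at x (x <> q, -q):
   grad d_q (x) = (cos(d) x - q) / sin(d), d = d_q(x);
   it is set to 0 at x = q and x = -q where it is undefined (at x = q it is only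
   ever multiplied by phi(0) = 0). *)
Definition grad_dist (n : nat) (q x : nat -> R) : nat -> R :=
  let d := gdist n q x in
  fun i => if Req_EM_T (sin d) 0 then 0 else (cos d * x i - q i) / sin d.

Definition kk : nat := 4.

Definition I_k (r : R) : R := RInt (fun s => sin s ^ (kk - 1)) 0 r.

Definition phi (t : R) : R :=
  if Req_EM_T t 0 then 0 else I_k t / sin t ^ (kk - 1).

Definition Phi (n : nat) (q : nat -> R) (x : nat -> R) : nat -> R :=
  fun i => phi (gdist n q x) * grad_dist n q x i.

Definition Psi (n : nat) (q : nat -> R) : (nat -> R) -> nat -> R := Phi n (vopp q).

Definition hfun (R0 s : R) : R := cos R0 / (sin R0 ^ 2) * sin s.

Definition Zfield (n : nat) (R0 : R) (y : nat -> R) (gamma : R -> nat -> R)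
  (x : nat -> R) : nat -> R :=
  fun i => Psi n y x i + RInt (fun s => hfun R0 s * Psi n (gamma s) x i) R0 PI.

From Stdlib Require Import Reals Lra Lia.
From Coquelicot Require Import Coquelicot.
Open Scope R_scope.

(* Since
   I_4(t) = (1 - cos t)^2 (2 + cos t) / 3, the field Psi_q at x equals
   (2 - d) (q - d x) / (3 (1 - d)^2) with d = <q, x>.  The geodesic gamma
   runs along the great circle through p and y, so
   gamma(s) = (sin (R - s) p + sin s y) / sin R and
   u(s) := <gamma(s), x> = cos R cos s + m sin s, m = (<y, x> - cos^2 R) / sin R.
   Since grad d_p = (cos R x - p) / sin R is orthogonal to x, pairing Z with it
   leaves a constant times the integral of
   sin s (2 - u) (cos s - cos R u) / (1 - u)^2, which has the elementary
   primitive sin^2 s / (1 - u) - cos R cos s.  At the endpoints u(R) = <y, x>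
   and u(pi) = -cos R, and the identity follows by algebra. *)

Lemma dot_comm n u v : dot n u v = dot n v u.
Proof. unfold dot; apply sum_eq; intros; ring. Qed.

Lemma dot_plus_l n u v w :
  dot n (fun i => u i + v i) w = dot n u w + dot n v w.
Proof. unfold dot; induction n as [|n IH]; simpl; [|rewrite IH]; ring. Qed.

Lemma dot_scal_l n a u w : dot n (fun i => a * u i) w = a * dot n u w.
Proof. unfold dot; induction n as [|n IH]; simpl; [|rewrite IH]; ring. Qed.

Lemma dot_plus_r n u v w :
  dot n w (fun i => u i + v i) = dot n w u + dot n w v.
Proof. rewrite !(dot_comm n w); apply dot_plus_l. Qed.

Lemma dot_scal_r n a u w : dot n w (fun i => a * u i) = a * dot n w u.
Proof. rewrite !(dot_comm n w); apply dot_scal_l. Qed.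

Lemma dot_vopp_l n u v : dot n (vopp u) v = - dot n u v.
Proof. unfold dot, vopp; induction n as [|n IH]; simpl; [|rewrite IH]; ring. Qed.

Lemma dot_veq n u u' v v' : veq n u u' -> veq n v v' -> dot n u v = dot n u' v'.
Proof. intros Hu Hv; unfold dot; apply sum_eq; intros i Hi; rewrite Hu, Hv; auto. Qed.

Lemma dot_self_ge0 n u : 0 <= dot n u u.
Proof. unfold dot; induction n; simpl; nra. Qed.

Lemma dot_self_eq0 n u : dot n u u = 0 -> veq n u (fun _ => 0).
Proof.
  induction n as [|n IH]; intros H i Hi.
  - unfold dot in H; simpl in H. replace i with 0%nat by lia. nra.
  - pose proof (dot_self_ge0 n u) as Hn. unfold dot in H, Hn; simpl in H.
    destruct (Nat.eq_dec i (S n)) as [->|Hne]; [nra|].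
    apply IH; [unfold dot|]; [nra|lia].
Qed.

Lemma dot_self_add_scal n u v a :
  dot n (fun i => u i + a * v i) (fun i => u i + a * v i)
  = dot n u u + 2 * a * dot n u v + a ^ 2 * dot n v v.
Proof.
  rewrite dot_plus_l, !dot_plus_r, !dot_scal_l, !dot_scal_r, (dot_comm n v u); ring.
Qed.

Lemma sphere_dot_bound n u v :
  on_sphere n u -> on_sphere n v -> -1 <= dot n u v <= 1.
Proof.
  unfold on_sphere; intros Hu Hv.
  pose proof (dot_self_ge0 n (fun i => u i + 1 * v i)) as H1.
  pose proof (dot_self_ge0 n (fun i => u i + -1 * v i)) as H2.
  rewrite dot_self_add_scal, Hu, Hv in H1, H2; lra.
Qed.

Lemma sphere_dot_eq1 n u v :
  on_sphere n u -> on_sphere n v -> dot n u v = 1 -> veq n u v.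
Proof.
  unfold on_sphere; intros Hu Hv Huv i Hi.
  assert (H0 : dot n (fun i => u i + -1 * v i) (fun i => u i + -1 * v i) = 0)
    by (rewrite dot_self_add_scal, Hu, Hv, Huv; ring).
  pose proof (dot_self_eq0 n _ H0 i Hi); simpl in *; lra.
Qed.

Lemma cos_gdist n q x :
  on_sphere n q -> on_sphere n x -> cos (gdist n q x) = dot n q x.
Proof. intros; apply cos_acos, sphere_dot_bound; auto. Qed.

Lemma sin_pow2 x : sin x ^ 2 = 1 - cos x ^ 2.
Proof. rewrite <- !Rsqr_pow2; apply sin2. Qed.

Lemma I_k_closed t : I_k t = (1 - cos t) ^ 2 * (2 + cos t) / 3.
Proof.
  unfold I_k; change (kk - 1)%nat with 3%nat.
  apply is_RInt_unique.
  replace ((1 - cos t) ^ 2 * (2 + cos t) / 3)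
    with (minus ((1 - cos t) ^ 2 * (2 + cos t) / 3) ((1 - cos 0) ^ 2 * (2 + cos 0) / 3))
    by (rewrite cos_0; unfold minus, plus, opp; simpl; field).
  apply (is_RInt_derive (fun s => (1 - cos s) ^ 2 * (2 + cos s) / 3)).
  - intros s _; auto_derive; auto.
    replace (sin s ^ 3) with (sin s * sin s ^ 2) by ring; rewrite sin_pow2; field.
  - intros s _; apply (@ex_derive_continuous R_AbsRing R_NormedModule); auto_derive; auto.
Qed.

Lemma grad_dist_val n q x i : sin (gdist n q x) <> 0 ->
  grad_dist n q x i = (cos (gdist n q x) * x i - q i) / sin (gdist n q x).
Proof. intros H; unfold grad_dist; destruct (Req_EM_T _ 0); [contradiction|reflexivity]. Qed.

Lemma dot_grad_dist n q x v : sin (gdist n q x) <> 0 ->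
  dot n v (grad_dist n q x)
  = (cos (gdist n q x) * dot n v x - dot n v q) / sin (gdist n q x).
Proof.
  intros H.
  rewrite (dot_veq n v v _ (fun i => cos (gdist n q x) / sin (gdist n q x) * x i
                                    + (-1 / sin (gdist n q x)) * q i)).
  - rewrite dot_plus_r, !dot_scal_r; field; auto.
  - intros i _; reflexivity.
  - intros i _; rewrite grad_dist_val; auto; field; auto.
Qed.

Lemma Phi_sphere n q x i :
  on_sphere n q -> on_sphere n x -> -1 < dot n q x -> (i <= n)%nat ->
  Phi n q x i
  = (2 + dot n q x) * (dot n q x * x i - q i) / (3 * (1 + dot n q x) ^ 2).
Proof.
  intros Hq Hx Hd Hi.
  pose proof (sphere_dot_bound n q x Hq Hx) as Hb.
  unfold Phi, phi, grad_dist, gdist; cbv zeta; set (d := dot n q x) in *.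
  destruct (Req_dec d 1) as [H1|H1].
  - (* x = q: the gradient is junk there, but phi 0 = 0 *)
    rewrite (sphere_dot_eq1 n q x Hq Hx H1 i Hi), H1, acos_1.
    destruct (Req_EM_T 0 0) as [_|]; [|congruence]; field.
  - assert (Hsin : sin (acos d) = sqrt (1 - d ^ 2))
      by (rewrite sin_acos by lra; f_equal; unfold Rsqr; ring).
    assert (Hsq : 0 < sqrt (1 - d ^ 2)) by (apply sqrt_lt_R0; nra).
    assert (Hsq2 : sqrt (1 - d ^ 2) ^ 2 = 1 - d ^ 2)
      by (rewrite <- Rsqr_pow2; apply Rsqr_sqrt; nra).
    destruct (Req_EM_T (acos d) 0) as [H0|_].
    { rewrite H0, sin_0 in Hsin; lra. }
    rewrite Hsin, I_k_closed, cos_acos by lra.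
    destruct (Req_EM_T (sqrt (1 - d ^ 2)) 0) as [|_]; [lra|].
    change (kk - 1)%nat with 3%nat.
    transitivity ((1 - d) ^ 2 * (2 + d) * (d * x i - q i) / (3 * (sqrt (1 - d ^ 2) ^ 2) ^ 2)).
    { field; lra. }
    rewrite Hsq2; field; split; nra.
Qed.

Lemma on_sphere_vopp n q : on_sphere n q -> on_sphere n (vopp q).
Proof.
  unfold on_sphere; intros Hq; rewrite dot_vopp_l, (dot_comm n q), dot_vopp_l, Hq; ring.
Qed.

Lemma Psi_sphere n q x i :
  on_sphere n q -> on_sphere n x -> dot n q x < 1 -> (i <= n)%nat ->
  Psi n q x i
  = (2 - dot n q x) * (q i - dot n q x * x i) / (3 * (1 - dot n q x) ^ 2).
Proof.
  intros Hq Hx Hd Hi.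
  unfold Psi; rewrite Phi_sphere, dot_vopp_l; auto using on_sphere_vopp.
  - unfold vopp; field; lra.
  - rewrite dot_vopp_l; lra.
Qed.

Lemma dot_Psi n q x w :
  on_sphere n q -> on_sphere n x -> dot n q x < 1 ->
  dot n (Psi n q x) w
  = (2 - dot n q x) * (dot n q w - dot n q x * dot n x w) / (3 * (1 - dot n q x) ^ 2).
Proof.
  intros Hq Hx Hd.
  set (k := (2 - dot n q x) / (3 * (1 - dot n q x) ^ 2)).
  rewrite (dot_veq n _ (fun i => k * q i + (- k * dot n q x) * x i) w w).
  - rewrite dot_plus_l, !dot_scal_l; unfold k; field; lra.
  - intros i Hi; rewrite Psi_sphere; auto; unfold k; field; lra.
  - intros i _; reflexivity.
Qed.

Lemma sphere_great_circle n p y g a b :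
  on_sphere n p -> on_sphere n y -> on_sphere n g -> sin a <> 0 ->
  dot n p y = cos a -> dot n g p = cos b -> dot n g y = cos (b - a) ->
  veq n g (fun i => sin (a - b) / sin a * p i + sin b / sin a * y i).
Proof.
  intros Hp Hy Hg Ha Hpy Hgp Hgy.
  pose proof (sin_pow2 a) as Ea; pose proof (sin_pow2 b) as Eb.
  apply sphere_dot_eq1; auto; unfold on_sphere in *.
  - rewrite dot_plus_l, !dot_plus_r, !dot_scal_l, !dot_scal_r, (dot_comm n y p), Hp, Hy, Hpy.
    rewrite sin_minus; field_simplify_eq; auto; ring [Ea Eb].
  - rewrite dot_plus_r, !dot_scal_r, Hgp, Hgy, sin_minus, cos_minus.
    field_simplify_eq; auto; ring [Ea Eb].
Qed.

Lemma is_RInt_dot n (F : R -> nat -> R) w a b :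
  (forall i, (i <= n)%nat -> ex_RInt (fun s => F s i) a b) ->
  is_RInt (fun s => dot n (F s) w) a b (dot n (fun i => RInt (fun s => F s i) a b) w).
Proof.
  assert (Hterm : forall i, ex_RInt (fun s => F s i) a b ->
            is_RInt (fun s => F s i * w i) a b (RInt (fun s => F s i) a b * w i)).
  { intros i Hi; rewrite Rmult_comm.
    apply (is_RInt_ext (fun s => scal (w i) (F s i))).
    - intros s _; apply Rmult_comm.
    - apply (@is_RInt_scal R_NormedModule), (@RInt_correct R_CompleteNormedModule), Hi. }
  unfold dot; induction n as [|n IH]; intros Hex; simpl.
  - apply Hterm, Hex; lia.
  - apply (is_RInt_plus (fun s => sum_f_R0 (fun i => F s i * w i) n)
                        (fun s => F s (S n) * w (S n))).
    + apply IH; intros i Hi; apply Hex; lia.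
    + apply Hterm, Hex; lia.
Qed.

Lemma RInt_dot n (F : R -> nat -> R) w a b :
  (forall i, (i <= n)%nat -> ex_RInt (fun s => F s i) a b) ->
  RInt (fun s => dot n (F s) w) a b = dot n (fun i => RInt (fun s => F s i) a b) w.
Proof. intros Hex; apply is_RInt_unique, is_RInt_dot, Hex. Qed.

Lemma RInt_hfun r a b : RInt (hfun r) a b = cos r / sin r ^ 2 * (cos a - cos b).
Proof.
  unfold hfun; set (k := cos r / sin r ^ 2).
  apply is_RInt_unique.
  replace (k * (cos a - cos b)) with (minus (- k * cos b) (- k * cos a))
    by (unfold minus, plus, opp; simpl; ring).
  apply (is_RInt_derive (fun s => - k * cos s)).
  - intros s _; auto_derive; auto; ring.
  - intros s _; apply (@ex_derive_continuous R_AbsRing R_NormedModule); auto_derive; auto.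
Qed.

Definition harmonic (a b s : R) : R := a * cos s + b * sin s.

Lemma is_derive_harmonic_primitive a b s : harmonic a b s <> 1 ->
  is_derive (fun t => sin t ^ 2 / (1 - harmonic a b t) - a * cos t) s
    (sin s * (2 - harmonic a b s) * (cos s - a * harmonic a b s)
     / (1 - harmonic a b s) ^ 2).
Proof.
  unfold harmonic; intros Hs.
  auto_derive; [lra|].
  pose proof (sin_pow2 s) as E; field_simplify_eq; [ring [E]|lra].
Qed.

Lemma is_RInt_harmonic_ratio a b lo hi : lo <= hi ->
  (forall s, lo <= s <= hi -> harmonic a b s <> 1) ->
  is_RInt (fun s => sin s * (2 - harmonic a b s) * (cos s - a * harmonic a b s)
                    / (1 - harmonic a b s) ^ 2) lo hi
    ((sin hi ^ 2 / (1 - harmonic a b hi) - a * cos hi)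
     - (sin lo ^ 2 / (1 - harmonic a b lo) - a * cos lo)).
Proof.
  intros Hle Hne.
  apply (is_RInt_derive (fun t => sin t ^ 2 / (1 - harmonic a b t) - a * cos t));
    rewrite Rmin_left, Rmax_right by lra; intros s Hs.
  - apply is_derive_harmonic_primitive, Hne, Hs.
  - apply (@ex_derive_continuous R_AbsRing R_NormedModule).
    specialize (Hne s Hs); unfold harmonic in *; auto_derive.
    rewrite Rmult_1_r; apply Rmult_integral_contrapositive; split; lra.
Qed.

Section BoundaryPoint.

Variables (n : nat) (p y x : nat -> R) (r : R) (gamma : R -> nat -> R).
Hypotheses (Hp : on_sphere n p) (Hy : on_sphere n y) (Hx : on_sphere n x).
Hypothesis Hr : 0 < r < PI / 2.
Hypotheses (Hpy : gdist n p y = r) (Hpx : gdist n p x = r) (Hxy : ~ veq n x y).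
Hypothesis Hg : forall s, r <= s <= PI -> on_sphere n (gamma s).
Hypothesis Hg0 : veq n (gamma r) y.
Hypothesis Hgd : forall s t, r <= s <= PI -> r <= t <= PI ->
  gdist n (gamma s) (gamma t) = Rabs (s - t).
Hypothesis Hgp : forall s, r <= s <= PI -> gdist n p (gamma s) = s.

Lemma sin_r_gt0 : 0 < sin r.
Proof. apply sin_gt_0; pose proof PI_RGT_0; lra. Qed.

Lemma dot_p_x : dot n p x = cos r.
Proof. rewrite <- Hpx; symmetry; apply cos_gdist; auto. Qed.

Lemma dot_p_y : dot n p y = cos r.
Proof. rewrite <- Hpy; symmetry; apply cos_gdist; auto. Qed.

Lemma dot_p_gamma s : r <= s <= PI -> dot n p (gamma s) = cos s.
Proof. intros Hs; rewrite <- (Hgp s Hs) at 2; symmetry; apply cos_gdist; auto. Qed.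

Lemma dot_y_x_lt1 : dot n y x < 1.
Proof.
  destruct (sphere_dot_bound n y x Hy Hx) as [_ [Hlt|Heq]]; [exact Hlt|].
  exfalso; apply Hxy; intros i Hi; symmetry; apply (sphere_dot_eq1 n y x); auto.
Qed.

Lemma gamma_great_circle s : r <= s <= PI ->
  veq n (gamma s) (fun i => sin (r - s) / sin r * p i + sin s / sin r * y i).
Proof.
  intros Hs; pose proof sin_r_gt0.
  apply sphere_great_circle; auto; try lra.
  - exact dot_p_y.
  - rewrite dot_comm; apply dot_p_gamma, Hs.
  - rewrite <- (dot_veq n (gamma s) (gamma s) (gamma r) y) by easy.
    rewrite <- cos_gdist, Hgd, Rabs_right by (try apply Hg; lra); reflexivity.
Qed.

Lemma dot_gamma_x s : r <= s <= PI ->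
  dot n (gamma s) x = harmonic (cos r) ((dot n y x - cos r ^ 2) / sin r) s.
Proof.
  intros Hs; pose proof sin_r_gt0.
  rewrite (dot_veq n _ _ x x (gamma_great_circle s Hs)) by (intros i _; reflexivity).
  rewrite dot_plus_l, !dot_scal_l, dot_p_x, sin_minus; unfold harmonic; field; lra.
Qed.

Lemma dot_gamma_x_lt1 s : r <= s <= PI -> dot n (gamma s) x < 1.
Proof.
  intros Hs.
  destruct (sphere_dot_bound n (gamma s) x (Hg s Hs) Hx) as [_ [Hlt|Heq]]; [exact Hlt|].
  exfalso; pose proof (sphere_dot_eq1 n _ _ (Hg s Hs) Hx Heq) as Hgx.
  assert (Hsr : s = r).
  { apply cos_inj; try lra.
    rewrite <- dot_p_x, <- (dot_p_gamma s Hs).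
    apply dot_veq; auto; intros i _; reflexivity. }
  subst s; apply Hxy; intros i Hi; rewrite <- Hgx, Hg0; auto.
Qed.

Lemma dot_grad_p_x v :
  dot n v (grad_dist n p x) = (cos r * dot n v x - dot n v p) / sin r.
Proof. pose proof sin_r_gt0; rewrite dot_grad_dist; rewrite Hpx; [reflexivity | lra]. Qed.

Lemma harmonic_gamma_lt1 s : r <= s <= PI ->
  harmonic (cos r) ((dot n y x - cos r ^ 2) / sin r) s < 1.
Proof. intros Hs; rewrite <- dot_gamma_x by exact Hs; apply dot_gamma_x_lt1, Hs. Qed.

Lemma ex_RInt_Zfield_integrand i : (i <= n)%nat ->
  ex_RInt (fun s => hfun r s * Psi n (gamma s) x i) r PI.
Proof.
  intros Hi; pose proof sin_r_gt0.
  set (u := harmonic (cos r) ((dot n y x - cos r ^ 2) / sin r)).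
  apply (ex_RInt_ext (fun s => hfun r s * ((2 - u s)
    * (sin (r - s) / sin r * p i + sin s / sin r * y i - u s * x i)
    / (3 * (1 - u s) ^ 2)))).
  - rewrite Rmin_left, Rmax_right by lra; intros s Hs.
    assert (Hs' : r <= s <= PI) by lra.
    rewrite Psi_sphere by auto using dot_gamma_x_lt1.
    rewrite (gamma_great_circle s Hs' i Hi), dot_gamma_x by exact Hs'; reflexivity.
  - apply (@ex_RInt_continuous R_CompleteNormedModule).
    rewrite Rmin_left, Rmax_right by lra; intros s Hs.
    pose proof (harmonic_gamma_lt1 s Hs).
    apply (@ex_derive_continuous R_AbsRing R_NormedModule).
    unfold u, hfun, harmonic in *; auto_derive.
    replace (cos r * (cos r * 1)) with (cos r ^ 2) by ring.
    apply Rmult_integral_contrapositive; split; [lra|]; rewrite Rmult_1_r.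
    apply Rmult_integral_contrapositive; split; lra.
Qed.

Lemma dot_Zfield_integrand_grad s : r <= s <= PI ->
  let u := harmonic (cos r) ((dot n y x - cos r ^ 2) / sin r) s in
  dot n (fun i => hfun r s * Psi n (gamma s) x i) (grad_dist n p x)
  = - (cos r / (3 * sin r ^ 3))
    * (sin s * (2 - u) * (cos s - cos r * u) / (1 - u) ^ 2).
Proof.
  intros Hs u; pose proof sin_r_gt0; pose proof (harmonic_gamma_lt1 s Hs) as Hu.
  rewrite dot_scal_l, dot_Psi, !dot_grad_p_x by auto using dot_gamma_x_lt1.
  rewrite (dot_comm n (gamma s) p), (dot_comm n x p), dot_p_gamma, dot_p_x, Hx, dot_gamma_x
    by exact Hs.
  fold u in Hu |- *; unfold hfun; field; split; lra.
Qed.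

Lemma dot_Zfield_grad :
  let c := dot n y x in
  dot n (Zfield n r y gamma x) (grad_dist n p x)
  = - (2 - c) * cos r / (3 * sin r * (1 - c))
    - cos r / (3 * sin r ^ 3) * (cos r + cos r ^ 2 - sin r ^ 2 / (1 - c)).
Proof.
  intros c; unfold c; pose proof sin_r_gt0; pose proof dot_y_x_lt1.
  assert (0 < cos r) by (apply cos_gt_0; lra).
  unfold Zfield; rewrite dot_plus_l, <- RInt_dot by exact ex_RInt_Zfield_integrand.
  rewrite dot_Psi, !dot_grad_p_x, (dot_comm n y p), (dot_comm n x p), dot_p_y, dot_p_x, Hx
    by auto.
  set (u := harmonic (cos r) ((dot n y x - cos r ^ 2) / sin r)).
  rewrite (RInt_ext _ (fun s => - (cos r / (3 * sin r ^ 3))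
    * (sin s * (2 - u s) * (cos s - cos r * u s) / (1 - u s) ^ 2))).
  2: { rewrite Rmin_left, Rmax_right by lra; intros s Hs.
       apply dot_Zfield_integrand_grad; lra. }
  erewrite is_RInt_unique.
  2: { apply (@is_RInt_scal R_NormedModule), is_RInt_harmonic_ratio; [lra|].
       intros s Hs; apply Rlt_not_eq, harmonic_gamma_lt1, Hs. }
  unfold scal; simpl; unfold mult; simpl.
  unfold u, harmonic; rewrite sin_PI, cos_PI.
  replace (cos r * cos r + (dot n y x - cos r ^ 2) / sin r * sin r) with (dot n y x)
    by (field; lra).
  field; repeat split; nra.
Qed.

End BoundaryPoint.

Theorem lemma3p2 (n : nat) (p y : nat -> R) (R0 : R) (gamma : R -> nat -> R) :
  on_sphere n p ->
  0 < R0 < PI / 2 ->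
  (* y in the boundary of B_R *)
  on_sphere n y -> gdist n p y = R0 ->
  (* gamma : [R,pi] -> S^n unit-speed minimizing geodesic from y to -p *)
  (forall s, R0 <= s <= PI -> on_sphere n (gamma s)) ->
  veq n (gamma R0) y ->
  veq n (gamma PI) (vopp p) ->
  (forall s t, R0 <= s <= PI -> R0 <= t <= PI ->
     gdist n (gamma s) (gamma t) = Rabs (s - t)) ->
  (forall s, R0 <= s <= PI -> gdist n p (gamma s) = s) ->
  forall x : nat -> R,
    on_sphere n x -> gdist n p x = R0 -> ~ veq n x y ->
    - 3 * tan R0 * dot n (Zfield n R0 y gamma x) (grad_dist n p x)
    = 1 + RInt (hfun R0) R0 PI.
Proof.
  intros Hp HR Hy Hpy Hg Hg0 _ Hgd Hgp x Hx Hpx Hxy.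
  pose proof (sin_r_gt0 R0 HR).
  assert (0 < cos R0) by (apply cos_gt_0; lra).
  pose proof (dot_y_x_lt1 n y x Hy Hx Hxy).
  rewrite (dot_Zfield_grad n p y x R0 gamma), RInt_hfun, cos_PI by auto.
  unfold tan; field; repeat split; lra.
Qed.
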